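(* Let $N\ge 2$ be an integer. For nonnegative reals $h_1,\dots,h_N,g_1,\dots,g_N$ define (logarithms base $2$, $[x]^+=\max\{x,0\}$, $\Omega^c=\{1,\dots,N\}\setminus\Omega$) $$\overline C:=\min_{\Omega\subseteq\{1,\dots,N\}}\Big\{\log\Big(1+\big(\textstyle\sum_{i\in\Omega}g_i\big)^2\Big)+\log\Big(1+\sum_{j\in\Omega^c}h_j^2\Big)\Big\},$$ and for $\Delta>0$ $$R_{\mathrm{QMF}}(\Delta):=\min_{\Omega\subseteq\{1,\dots,N\}}\Big[\log\Big(1+\sum_{i\in\Omega}g_i^2\Big)+\log\Big(1+\sum_{j\in\Omega^c}\frac{h_j^2}{1+\Delta}\Big)-|\Omega|\log\frac{1+\Delta}{\Delta}\Big]^+.$$ Let $$\mathrm{gap}^*(\Delta;N):=\max\Big\{\log N+N\log\frac{1+\Delta}{\Delta},\ \log(N-1)+(N-1)\log\frac{1+\Delta}{\Delta}+\log(1+\Delta)\Big\}.$$ Then: (i) for every $\Delta>0$ and all nonnegative $h_i,g_i$, $\overline C-R_{\mathrm{QMF}}(\Delta)\le\mathrm{gap}^*(\Delta;N)$; (ii) $\min_{\Delta>0}\mathrm{gap}^*(\Delta;N)$ is attained at $\Delta_{\mathrm{opt}}=\frac{N}{N-1}$ if $N=2$ and at $\Delta_{\mathrm{opt}}=N-1$ if $N>2$, and the minimum value is $$\mathrm{gap}^*(N)=\begin{cases}2\log 3-1,& N=2,\\ N\log\frac{N}{N-1}+2\log(N-1),& N>2;\end{cases}$$ in particular, with the channel-independent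 choice $\Delta=\Delta_{\mathrm{opt}}$ at all relays, $\overline C-R_{\mathrm{QMF}}(\Delta_{\mathrm{opt}})\le\mathrm{gap}^*(N)=\Theta(\log N)$.
   Context: The setting is the full-duplex Gaussian $N$-relay diamond network: a source transmits $X$ with $\mathbb E|X|^2\le1$; relay $i$ receives $Y_i=\mathsf h_iX+Z_i$ and transmits $X_i$ with $\mathbb E|X_i|^2\le 1$; the destination receives $Y=\sum_i\mathsf g_iX_i+Z$, with i.i.d. $\mathcal{CN}(0,1)$ noises, and $h_i=|\mathsf h_i|$, $g_i=|\mathsf g_i|$. $\overline C$ is the cutset upper bound on capacity, and $R_{\mathrm{QMF}}(\Delta)$ is the quantize-map-and-forward achievable rate when every relay uses a Gaussian vector quantizer $\hat Y_i=Y_i+\hat Z_i$, $\hat Z_i\sim\mathcal{CN}(0,\Delta)$. *)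

From HB Require Import structures.
From mathcomp Require Import all_boot all_order all_algebra.
From mathcomp Require Import all_classical all_reals.
From mathcomp Require Import exp.
Set Implicit Arguments. Unset Strict Implicit. Unset Printing Implicit Defensive.
Import Order.TTheory GRing.Theory Num.Theory.
Local Open Scope ring_scope.

Section Defs.
Variable R : realType.

Definition log2 (x : R) : R := ln x / ln 2.

Definition pos_part (x : R) : R := Num.max x 0.

(* minimum of F over all subsets Omega of {1..N} (here 'I_N);
   the seed F setT is itself one of the values, so this is the exact min *)
Definition min_subsets (N : nat) (F : {set 'I_N} -> R) : R :=
  \big[Order.min/F [set: 'I_N]%SET]_(S : {set 'I_N}) F S.

Definition Cbar (N : nat) (h g : 'I_N -> R) : R :=
  min_subsets (fun S : {set 'I_N} =>
    log2 (1 + (\sum_(i in S) g i) ^+ 2) + log2 (1 + \sum_(j in ~: S) h j ^+ 2)).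

Definition RQMF (N : nat) (h g : 'I_N -> R) (D : R) : R :=
  min_subsets (fun S : {set 'I_N} =>
    pos_part (log2 (1 + \sum_(i in S) g i ^+ 2)
              + log2 (1 + \sum_(j in ~: S) h j ^+ 2 / (1 + D))
              - #|S|%:R * log2 ((1 + D) / D))).

Definition gapstar (D : R) (N : nat) : R :=
  Num.max (log2 N%:R + N%:R * log2 ((1 + D) / D))
          (log2 (N.-1)%:R + (N.-1)%:R * log2 ((1 + D) / D) + log2 (1 + D)).

Definition Delta_opt (N : nat) : R :=
  if N == 2%N then N%:R / (N.-1)%:R else (N.-1)%:R.

Definition gapstar_val (N : nat) : R :=
  if N == 2%N then 2 * log2 3 - 1
  else N%:R * log2 (N%:R / (N.-1)%:R) + 2 * log2 (N.-1)%:R.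

End Defs.

From HB Require Import structures.
From mathcomp Require Import all_boot all_order all_algebra.
From mathcomp Require Import all_classical all_reals.
From mathcomp Require Import exp.
From mathcomp Require Import ring lra zify.
Import Order.TTheory GRing.Theory Num.Theory.

(* For a fixed cut, Cauchy-Schwarz bounds the beamforming gain (sum_i g_i)^2 by
   |Omega| sum_i g_i^2, and the quantization noise Delta costs at most
   log(1+Delta) on the Omega^c side, nothing if Omega^c is empty.  Together with
   the quantization loss |Omega| log((1+Delta)/Delta), the per-cut difference is
   bounded by the first term of gap*(Delta;N) when Omega is the full set and by
   the second one otherwise.  In Delta, the second term is minimal at Delta = N-1
   by a weighted AM-GM inequality and dominates the first one there when N > 2;
   for N = 2 the two terms balance at Delta = 2.  At Delta = N-1 both terms are
   at most 2 log N + 2 / ln 2. *)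

Set Implicit Arguments. Unset Strict Implicit. Unset Printing Implicit Defensive.
Local Open Scope ring_scope.

Section GapAnalysis.
Variable R : realType.

Lemma sqr_sum_le_card_sum_sqr (I : finType) (S : {set I}) (g : I -> R) :
  (\sum_(i in S) g i) ^+ 2 <= #|S|%:R * \sum_(i in S) g i ^+ 2.
Proof.
set G := \sum_(i in S) g i; set G2 := \sum_(i in S) g i ^+ 2.
have inner i : \sum_(j in S) (g i - g j) ^+ 2 = #|S|%:R * g i ^+ 2 + G2 - 2 * g i * G.
  rewrite (eq_bigr (fun j => g i ^+ 2 + g j ^+ 2 - 2 * g i * g j)); last by move=> j _; ring.
  by rewrite !big_split /= sumrN sumr_const -mulr_sumr [#|S|%:R * _]mulr_natl.
have sum_sqr_diff : \sum_(i in S) \sum_(j in S) (g i - g j) ^+ 2 = 2 * (#|S|%:R * G2 - G ^+ 2).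
  rewrite (eq_bigr _ (fun i _ => inner i)) !big_split /= sumrN sumr_const.
  rewrite -mulr_suml -!mulr_sumr -/G -/G2 -mulr_natl; ring.
have : 0 <= \sum_(i in S) \sum_(j in S) (g i - g j) ^+ 2.
  by apply: sumr_ge0 => i _; apply: sumr_ge0 => j _; exact: sqr_ge0.
rewrite sum_sqr_diff; lra.
Qed.

Lemma ln2_gt0 : 0 < ln (2 : R).
Proof. by apply: ln_gt0; lra. Qed.

Lemma log2_1 : log2 (1 : R) = 0.
Proof. by rewrite /log2 ln1 mul0r. Qed.

Lemma log2_2 : log2 (2 : R) = 1.
Proof. by rewrite /log2 divff // gt_eqF // ln2_gt0. Qed.

Lemma log2M (x y : R) : 0 < x -> 0 < y -> log2 (x * y) = log2 x + log2 y.
Proof. by move=> x_gt0 y_gt0; rewrite /log2 lnM ?posrE // mulrDl. Qed.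

Lemma log2_div (x y : R) : 0 < x -> 0 < y -> log2 (x / y) = log2 x - log2 y.
Proof. by move=> x_gt0 y_gt0; rewrite /log2 ln_div ?posrE // mulrBl. Qed.

Lemma ler_log2 (x y : R) : 0 < x -> x <= y -> log2 x <= log2 y.
Proof.
move=> x_gt0 le_xy; rewrite /log2 ler_pM2r ?invr_gt0 ?ln2_gt0 //.
by rewrite ler_ln ?posrE // (lt_le_trans x_gt0).
Qed.

Lemma log2_ge0 (x : R) : 1 <= x -> 0 <= log2 x.
Proof. by move=> x_ge1; apply: divr_ge0; [exact: ln_ge0 | exact: ltW ln2_gt0]. Qed.

Lemma ln_le_subr1 (x : R) : 0 < x -> ln x <= x - 1.
Proof. by move=> x_gt0; have := @le_ln1Dx R (x - 1); rewrite addrCA subrr addr0; apply; lra. Qed.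

Lemma log2_le_subr1 (x : R) : 0 < x -> log2 x <= (x - 1) / ln 2.
Proof. by move=> x_gt0; rewrite /log2 ler_pM2r ?invr_gt0 ?ln2_gt0 // ln_le_subr1. Qed.

Lemma log2_1D_le_scale (x c : R) : 0 <= x -> 1 <= c ->
  log2 (1 + x) <= log2 c + log2 (1 + x / c).
Proof.
move=> x_ge0 c_ge1; rewrite -log2M; [|lra|by rewrite ltr_pwDl // divr_ge0 //; lra].
by apply: ler_log2; [lra | rewrite mulrDr mulr1 mulrC divfK ?gt_eqF //; lra].
Qed.

Lemma log2_1Dsqr_sum_le (I : finType) (S : {set I}) (g : I -> R) (k : nat) :
  (#|S| <= k)%N -> (0 < k)%N ->
  log2 (1 + (\sum_(i in S) g i) ^+ 2) <= log2 k%:R + log2 (1 + \sum_(i in S) g i ^+ 2).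
Proof.
move=> S_le_k k_gt0.
have G2_ge0 : 0 <= \sum_(i in S) g i ^+ 2 by apply: sumr_ge0 => i _; exact: sqr_ge0.
rewrite -log2M ?ltr0n //; last by lra.
apply: ler_log2; first by have := sqr_ge0 (\sum_(i in S) g i); lra.
have := sqr_sum_le_card_sum_sqr S g.
have : (#|S|%:R : R) <= k%:R by rewrite ler_nat.
have : (1 : R) <= k%:R by rewrite ler1n.
nra.
Qed.

Lemma min_subsets_le N (F : {set 'I_N} -> R) S : min_subsets F <= F S.
Proof. by rewrite /min_subsets (bigD1 S) //= ge_min lexx. Qed.

Lemma min_subsets_ge N (F : {set 'I_N} -> R) x :
  (forall S, x <= F S) -> x <= min_subsets F.
Proof.
move=> x_le_F; rewrite /min_subsets.
by apply: (big_ind (fun y => x <= y)) => // a b; rewrite le_min => -> ->.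
Qed.

Definition cutset_value (I : finType) (h g : I -> R) (S : {set I}) : R :=
  log2 (1 + (\sum_(i in S) g i) ^+ 2) + log2 (1 + \sum_(j in ~: S) h j ^+ 2).

Definition qmf_value (I : finType) (h g : I -> R) (D : R) (S : {set I}) : R :=
  log2 (1 + \sum_(i in S) g i ^+ 2) + log2 (1 + \sum_(j in ~: S) h j ^+ 2 / (1 + D))
  - #|S|%:R * log2 ((1 + D) / D).

Lemma cutset_sub_qmf_le_gapstar (I : finType) (h g : I -> R) (D : R) (S : {set I}) :
  (2 <= #|I|)%N -> 0 < D -> cutset_value h g S - qmf_value h g D S <= gapstar D #|I|.
Proof.
move=> I_ge2 D_gt0; rewrite /cutset_value /qmf_value /gapstar.
set a := log2 ((1 + D) / D).
have a_ge0 : 0 <= a by apply: log2_ge0; rewrite ler_pdivlMr // mul1r; lra.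
have -> : \sum_(j in ~: S) h j ^+ 2 / (1 + D) = (\sum_(j in ~: S) h j ^+ 2) / (1 + D).
  by rewrite mulr_suml.
have [->|S_neqT] := eqVneq S [set: I]%SET.
- have := log2_1Dsqr_sum_le g (leqnn #|[set: I]|) _.
  rewrite finset.setCT !big_set0 mul0r cardsT => /(_ (ltnW I_ge2)) cs.
  by rewrite le_max; apply/orP; left; lra.
- have H2_ge0 : 0 <= \sum_(j in ~: S) h j ^+ 2 by apply: sumr_ge0 => j _; exact: sqr_ge0.
  have := @proper_card _ S [set: I]%SET; rewrite properT cardsT => /(_ S_neqT) S_lt_I.
  have S_le_I1 : (#|S| <= #|I|.-1)%N by rewrite -ltnS prednK // (leq_ltn_trans _ S_lt_I).
  have cs := log2_1Dsqr_sum_le g S_le_I1 ltac:(lia).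
  have hs := @log2_1D_le_scale _ (1 + D) H2_ge0 ltac:(lra).
  have loss : #|S|%:R * a <= #|I|.-1%:R * a by rewrite ler_wpM2r // ler_nat.
  by rewrite le_max; apply/orP; right; lra.
Qed.

Lemma Cbar_sub_RQMF_le_gapstar N (h g : 'I_N -> R) (D : R) :
  (2 <= N)%N -> 0 < D -> Cbar h g - RQMF h g D <= gapstar D N.
Proof.
move=> N_ge2 D_gt0; rewrite lerBlDr addrC -lerBlDr.
apply: min_subsets_ge => S /=; rewrite -/(qmf_value h g D S).
have := cutset_sub_qmf_le_gapstar h g S _ D_gt0; rewrite card_ord => /(_ N_ge2).
have : Cbar h g <= cutset_value h g S by exact: min_subsets_le.
have : qmf_value h g D S <= pos_part (qmf_value h g D S) by rewrite /pos_part le_max lexx.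
lra.
Qed.

Lemma ln_second_term_min (m D : R) : 0 < m -> 0 < D ->
  m * ln ((1 + m) / m) + ln (1 + m) <= m * ln ((1 + D) / D) + ln (1 + D).
Proof.
move=> m_gt0 D_gt0.
set x1 := D * (1 + m) / (m * (1 + D)); set x2 := (1 + m) / (1 + D).
have x1_gt0 : 0 < x1 by rewrite divr_gt0 ?mulr_gt0 //; lra.
have x2_gt0 : 0 < x2 by rewrite divr_gt0 //; lra.
(* Weighted AM-GM: x1 and x2 have mean 1 for the weights m and 1, and
   m ln x1 + ln x2 is exactly the difference of the two sides. *)
have mean : m * (x1 - 1) + (x2 - 1) = 0.
  by rewrite /x1 /x2; field; rewrite !gt_eqF //; lra.
have ln_x1 : ln x1 = ln D + ln (1 + m) - (ln m + ln (1 + D)).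
  by rewrite ln_div ?lnM ?posrE ?mulr_gt0 //; lra.
have ln_x2 : ln x2 = ln (1 + m) - ln (1 + D) by rewrite ln_div ?posrE //; lra.
have := ler_wpM2l (ltW m_gt0) (ln_le_subr1 x1_gt0).
have := ln_le_subr1 x2_gt0.
by rewrite ln_x1 ln_x2 !ln_div ?posrE //; lra.
Qed.

Lemma log2_second_term_min (m D : R) : 0 < m -> 0 < D ->
  m * log2 ((1 + m) / m) + log2 (1 + m) <= m * log2 ((1 + D) / D) + log2 (1 + D).
Proof.
move=> m_gt0 D_gt0.
have to_ln u v : m * log2 u + log2 v = (m * ln u + ln v) / ln 2 by rewrite /log2; ring.
by rewrite !to_ln ler_pM2r ?invr_gt0 ?ln2_gt0 // ln_second_term_min.
Qed.

Lemma natr_predD1 (n : nat) : (0 < n)%N -> n%:R = n.-1%:R + 1 :> R.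
Proof. by move=> n_gt0; rewrite natr1 prednK. Qed.

Lemma log2_le_gapstar (D : R) N : 0 < D -> log2 N%:R <= gapstar D N.
Proof.
move=> D_gt0; rewrite le_max -lerBlDl subrr; apply/orP; left.
by rewrite mulr_ge0 ?log2_ge0 // ler_pdivlMr // mul1r; lra.
Qed.

Lemma gapstar_two (D : R) :
  gapstar D 2 = Num.max (1 + 2 * log2 ((1 + D) / D)) (log2 ((1 + D) / D) + log2 (1 + D)).
Proof. by rewrite /gapstar /= log2_2 log2_1 mul1r add0r. Qed.

Lemma gapstar_pred N : (2 < N)%N ->
  gapstar N.-1%:R N = log2 N.-1%:R + N.-1%:R * log2 (N%:R / N.-1%:R) + log2 N%:R :> R.
Proof.
move=> N_gt2; have N_gt0 : (0 < N)%N by lia.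
rewrite /gapstar.
have [m_ge2 ->] : (2 : R) <= N.-1%:R /\ N%:R = N.-1%:R + 1 :> R.
  by split; [rewrite (ler_nat R 2); lia | exact: natr_predD1].
set m := N.-1%:R : R.
have m1_le_sqr : m + 1 <= m * m by nra.
have log_sqr : log2 (m + 1) <= log2 m + log2 m.
  by rewrite -log2M; [apply: ler_log2|..]; lra.
rewrite [1 + m]addrC log2_div; [|lra|lra].
by rewrite max_r //; lra.
Qed.

Lemma Delta_opt_gt0 N : (2 <= N)%N -> 0 < Delta_opt R N.
Proof.
rewrite /Delta_opt; case: eqP => [-> _ /=|_ N_ge2]; first by rewrite divr1 ltr0n.
by rewrite ltr0n; lia.
Qed.

Lemma log2_three_halves : log2 (3 / 2 : R) = log2 3 - 1.
Proof. by rewrite log2_div ?log2_2 //; lra. Qed.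

Lemma gapstar_Delta_opt N : (2 <= N)%N -> gapstar (Delta_opt R N) N = gapstar_val R N.
Proof.
rewrite /Delta_opt /gapstar_val; case: eqP => [-> _ /=|N_neq2 N_ge2].
  rewrite gapstar_two divr1 (_ : 1 + 2 = 3 :> R) ?log2_three_halves; last lra.
  by rewrite max_r; lra.
have N_gt0 : (0 < N)%N by lia.
rewrite gapstar_pred; last by lia.
rewrite !log2_div ?ltr0n //; try lia.
by set L := log2 N%:R; rewrite (natr_predD1 N_gt0); ring.
Qed.

Lemma gapstar_two_min (D : R) : 0 < D -> gapstar 2 2 <= gapstar D 2.
Proof.
move=> D_gt0; rewrite !gapstar_two (_ : 1 + 2 = 3 :> R) ?log2_three_halves; last lra.
rewrite max_r; last lra.
rewrite le_max; have [D_le2|D_gt2] := lerP D 2; apply/orP; [left|right].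
  have : log2 (3 / 2) <= log2 ((1 + D) / D).
    by apply: ler_log2; [lra | rewrite ler_pdivlMr // mulrAC ler_pdivrMr; lra].
  by rewrite log2_three_halves; lra.
have : log2 (3 / 2 * 3) <= log2 ((1 + D) / D * (1 + D)).
  apply: ler_log2; [lra | rewrite [X in _ <= X]mulrAC ler_pdivlMr //].
  have : 0 <= (D - 2) * (D - 1 / 2) by rewrite mulr_ge0 //; lra.
  by rewrite mulrDr mulrBl; lra.
by rewrite (log2M (x := 3 / 2)) ?(log2M (x := (1 + D) / D)) ?log2_three_halves ?divr_gt0; lra.
Qed.

Lemma gapstar_Delta_opt_min N (D : R) : (2 <= N)%N -> 0 < D ->
  gapstar (Delta_opt R N) N <= gapstar D N.
Proof.
rewrite /Delta_opt; case: eqP => [-> _ /=|N_neq2 N_ge2 D_gt0].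
  by rewrite divr1; exact: gapstar_two_min.
have N_gt0 : (0 < N)%N by lia.
rewrite gapstar_pred /gapstar; last by lia.
rewrite (natr_predD1 N_gt0) [_ + 1]addrC; set m := N.-1%:R.
have m_gt0 : 0 < m by rewrite ltr0n; lia.
rewrite le_max; apply/orP; right.
by have := log2_second_term_min m_gt0 D_gt0; lra.
Qed.

Lemma gapstar_pred_le N : (2 <= N)%N -> gapstar N.-1%:R N <= 2 * log2 N%:R + 2 / ln 2 :> R.
Proof.
move=> N_ge2; have N_gt0 : (0 < N)%N by lia.
rewrite /gapstar (natr_predD1 N_gt0) [_ + 1]addrC; set m := N.-1%:R.
have m_ge1 : 1 <= m by rewrite ler1n; lia.
have logN_ge0 : 0 <= log2 (1 + m) by apply: log2_ge0; lra.
have logm_le : log2 m <= log2 (1 + m) by apply: ler_log2; lra.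
set a := log2 ((1 + m) / m); set L := 1 / ln 2 : R.
have L_gt0 : 0 < L by rewrite divr_gt0 ?ln2_gt0.
have a_le : a <= L / m.
  have := @log2_le_subr1 ((1 + m) / m) ltac:(rewrite divr_gt0 //; lra).
  by rewrite (_ : (1 + m) / m - 1 = 1 / m) ?[L / m]mulrAC //; field; lra.
have ma_le : m * a <= L.
  have mL : m * (L / m) = L by field; lra.
  by rewrite -[X in _ <= X]mL ler_wpM2l //; lra.
have a_le_L : a <= L by apply: le_trans a_le _; rewrite ler_pdivrMr; nra.
rewrite ge_max (_ : 2 / ln 2 = 2 * L); last by rewrite /L; field; rewrite gt_eqF ?ln2_gt0.
by apply/andP; split; lra.
Qed.

Lemma log2_le_gapstar_val N : (2 <= N)%N -> log2 N%:R <= gapstar_val R N.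
Proof. by move=> N_ge2; rewrite -gapstar_Delta_opt // log2_le_gapstar ?Delta_opt_gt0. Qed.

Lemma gapstar_val_le N : (2 <= N)%N -> gapstar_val R N <= (2 + 2 / ln 2) * log2 N%:R.
Proof.
move=> N_ge2; rewrite -gapstar_Delta_opt //.
have opt := @gapstar_Delta_opt_min N N.-1%:R N_ge2 ltac:(rewrite ltr0n; lia).
have logN_ge1 : 1 <= log2 (N%:R : R).
  by rewrite -[leLHS]log2_2 ler_log2 // (ler_nat R 2).
have := gapstar_pred_le N_ge2; have : 0 <= 2 / ln (2 : R) by rewrite divr_ge0 ?ltW ?ln2_gt0.
nra.
Qed.

End GapAnalysis.

Theorem mainTheorem7 (R : realType) (N : nat) (HN : (2 <= N)%N) :
  (* (i) *)
  (forall (D : R) (h g : 'I_N -> R), 0 < D ->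
     (forall i, 0 <= h i) -> (forall i, 0 <= g i) ->
     Cbar h g - RQMF h g D <= gapstar D N)
  (* (ii) the minimum over Delta > 0 of gap^*(Delta;N) is attained at Delta_opt
     and equals gap^*(N) *)
  /\ (0 < Delta_opt R N /\ forall D : R, 0 < D -> gapstar (Delta_opt R N) N <= gapstar D N)
  /\ gapstar (Delta_opt R N) N = gapstar_val R N
  (* in particular, with Delta = Delta_opt at all relays *)
  /\ (forall h g : 'I_N -> R,
        (forall i, 0 <= h i) -> (forall i, 0 <= g i) ->
        Cbar h g - RQMF h g (Delta_opt R N) <= gapstar_val R N)
  (* gap^*(N) = Theta(log N) *)
  /\ (exists c1 c2 : R, 0 < c1 /\ 0 < c2 /\
        forall M : nat, (2 <= M)%N ->
          c1 * log2 M%:R <= gapstar_val R M /\ gapstar_val R M <= c2 * log2 M%:R).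
Proof.
(* Only squares of the channel gains enter. *)
split; first by move=> D h g D_gt0 _ _; exact: Cbar_sub_RQMF_le_gapstar.
split; first by split=> [|D]; [exact: Delta_opt_gt0 | exact: gapstar_Delta_opt_min].
split; first exact: gapstar_Delta_opt.
split; first by move=> h g _ _; rewrite -gapstar_Delta_opt // Cbar_sub_RQMF_le_gapstar ?Delta_opt_gt0.
exists 1, (2 + 2 / ln 2); split; first lra.
split; first by rewrite addr_gt0 ?divr_gt0 ?ln2_gt0.
by move=> M M_ge2; rewrite mul1r log2_le_gapstar_val ?gapstar_val_le.
Qed.
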